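(* Let $x_1\ge x_2\ge\cdots\ge x_n\ge 0$ be integers and suppose there is a set $S\subseteq[n]$ of size $q$ such that $x_i=0$ for all $i\in S$. Increase $x_i$ by $1$ for every $i\in S$. Then $\Phi=\sum_{i=1}^n x_i^2$ increases by exactly $q$, and $\Psi = n\sum_i|x_i|+\sum_{i<j}|x_i-x_j|$ increases by at least $q^2$. *)

From mathcomp Require Import all_boot all_order all_algebra.
Set Implicit Arguments. Unset Strict Implicit. Unset Printing Implicit Defensive.
Import Order.TTheory GRing.Theory Num.Theory.
Local Open Scope ring_scope.

Definition Phi (n : nat) (x : 'I_n -> int) : int := \sum_(i < n) x i ^+ 2.

Definition Psi (n : nat) (x : 'I_n -> int) : int :=
  (n%:R * \sum_(i < n) `|x i|) + \sum_(i < n) \sum_(j < n | (i < j)%N) `|x i - x j|.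

Definition incr_on (n : nat) (S : {set 'I_n}) (x : 'I_n -> int) : 'I_n -> int :=
  fun i => x i + (i \in S)%:R.

From mathcomp Require Import all_boot all_order all_algebra.
From mathcomp Require Import ring lra.
Import Order.TTheory GRing.Theory Num.Theory.
Local Open Scope ring_scope.

(* Raising the coordinates in S from 0 to 1 adds 1 to each of q squares, so
   Phi grows by q.  In Psi the first term grows by exactly n q.  By the
   triangle inequality the pairwise term can drop by at most the pairwise
   spread of the indicator of S, which counts the q (n - q) pairs with exactly
   one index in S.  Hence Psi grows by at least n q - q (n - q) = q^2. *)

Lemma sum_indicator (R : pzSemiRingType) (T : finType) (S : {set T}) :
  \sum_(t : T) ((t \in S)%:R : R) = #|S|%:R.
Proof.
by rewrite -sumr_const [RHS]big_mkcond; apply: eq_bigr => t _; case: (t \in S).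
Qed.

Lemma normr_indicatorB (R : numDomainType) (a b : bool) :
  `|(a%:R : R) - b%:R| = (a != b)%:R.
Proof. by case: a; case: b; rewrite ?subrr ?normr0 ?subr0 ?sub0r ?normrN ?normr1. Qed.

Lemma sum_indicator_dist (R : numDomainType) (T : finType) (S : {set T}) :
  \sum_(s : T) \sum_(t : T) `|((s \in S)%:R : R) - (t \in S)%:R|
    = (#|S| * #|~: S|)%:R *+ 2.
Proof.
have row s : \sum_(t : T) `|((s \in S)%:R : R) - (t \in S)%:R|
               = (s \in S)%:R * #|~: S|%:R + (s \in ~: S)%:R * #|S|%:R.
  rewrite in_setC -!sum_indicator.
  under eq_bigr do rewrite normr_indicatorB.
  by case: (s \in S); rewrite ?mul1r ?mul0r ?addr0 ?add0r; apply: eq_bigr => t _;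
    rewrite ?in_setC; case: (t \in S).
under eq_bigr do rewrite row.
by rewrite big_split /= -!mulr_suml !sum_indicator -!natrM mulnC mulr2n.
Qed.

Lemma sum_sym_ltn_pairs (V : nmodType) (n : nat) (f : 'I_n -> 'I_n -> V) :
  (forall i j, f i j = f j i) -> (forall i, f i i = 0) ->
  \sum_(i < n) \sum_(j < n) f i j
    = (\sum_(i < n) \sum_(j < n | (i < j)%N) f i j) *+ 2.
Proof.
move=> f_sym f_diag.
have split_row i : \sum_(j < n) f i j = \sum_(j < n | (i < j)%N) f i j
    + \sum_(j < n) (if (j < i)%N then f i j else 0).
  rewrite (bigID (fun j : 'I_n => (i < j)%N)) /=; congr (_ + _).
  rewrite big_mkcond; apply: eq_bigr => j _.
  case: ltngtP => //= ij; by rewrite (val_inj ij) f_diag.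
under eq_bigr do rewrite split_row.
rewrite big_split /= [X in _ + X]exchange_big /= mulr2n; congr (_ + _).
apply: eq_bigr => i _; rewrite [RHS]big_mkcond; apply: eq_bigr => j _.
by case: ifP => // _; rewrite f_sym.
Qed.

Definition pair_spread {R : numDomainType} {n : nat} (x : 'I_n -> R) : R :=
  \sum_(i < n) \sum_(j < n | (i < j)%N) `|x i - x j|.

Lemma pair_spread_indicator (R : numDomainType) (n : nat) (S : {set 'I_n}) :
  pair_spread (fun i => ((i \in S)%:R : R)) = #|S|%:R * (n%:R - #|S|%:R).
Proof.
apply: (@pmulrnI R 2) => //; rewrite /pair_spread -sum_sym_ltn_pairs; last 2 first.
- by move=> i j; rewrite distrC.
- by move=> i; rewrite subrr normr0.
have -> : n%:R = #|S|%:R + #|~: S|%:R :> R by rewrite -natrD cardsC card_ord.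
by rewrite sum_indicator_dist addrAC subrr add0r natrM.
Qed.

Lemma pair_spread_le_addr (R : numDomainType) (n : nat) (x y : 'I_n -> R) :
  pair_spread x <= pair_spread (fun i => x i + y i) + pair_spread y.
Proof.
rewrite /pair_spread -big_split ler_sum // => i _.
rewrite -big_split ler_sum // => j _.
have -> : x i - x j = (x i + y i - (x j + y j)) - (y i - y j) by ring.
exact: ler_normB.
Qed.

Lemma Phi_incr_on (n : nat) (S : {set 'I_n}) (x : 'I_n -> int) :
  (forall i, i \in S -> x i = 0) -> Phi (incr_on S x) = Phi x + #|S|%:R.
Proof.
move=> x_S0; rewrite /Phi -sum_indicator -big_split /=; apply: eq_bigr => i _.
by rewrite /incr_on; case: (boolP (i \in S)) => [/x_S0 -> | _]; rewrite ?addr0.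
Qed.

Lemma sum_normr_incr_on (n : nat) (S : {set 'I_n}) (x : 'I_n -> int) :
  (forall i, 0 <= x i) ->
  \sum_(i < n) `|incr_on S x i| = \sum_(i < n) `|x i| + #|S|%:R.
Proof.
move=> x_ge0; rewrite -sum_indicator -big_split /=; apply: eq_bigr => i _.
by rewrite /incr_on !ger0_norm ?addr_ge0.
Qed.

Lemma PsiE (n : nat) (x : 'I_n -> int) :
  Psi x = n%:R * \sum_(i < n) `|x i| + pair_spread x.
Proof. by []. Qed.

Lemma Psi_incr_on (n : nat) (S : {set 'I_n}) (x : 'I_n -> int) :
  (forall i, 0 <= x i) -> Psi x + (#|S| ^ 2)%:R <= Psi (incr_on S x).
Proof.
move=> x_ge0.
have : pair_spread x <=
       pair_spread (incr_on S x) + pair_spread (fun i => ((i \in S)%:R : int)).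
  exact: pair_spread_le_addr.
rewrite pair_spread_indicator !PsiE sum_normr_incr_on // natrX.
lra.
Qed.

Theorem proposition6p3 (n q : nat) (x : 'I_n -> int) (S : {set 'I_n})
  (hnonneg : forall i, 0 <= x i)
  (hmono : forall i j : 'I_n, (i <= j)%N -> x j <= x i)
  (hS : #|S| = q)
  (hzero : forall i, i \in S -> x i = 0) :
  Phi (incr_on S x) = Phi x + q%:R /\
  Psi x + (q ^ 2)%:R <= Psi (incr_on S x).
Proof.
rewrite -hS; split; [exact: Phi_incr_on | exact: Psi_incr_on].
Qed.
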